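(* Let $\bar D$ be any distribution of $(\mathsf X,\bar{\mathsf Y})$ on $\mathcal X\times\{0,1\}$ and $f\colon\mathcal X\to[0,1]$ a randomised classifier with $\mathrm{FNR}(f;\bar D)\ne1$. Then for every $\epsilon\in[0,\tfrac12]$, $\mathrm{BER}(f;\bar D)\le\epsilon$ implies $\mathrm{DI}(f;\bar D)\le2\epsilon$; equivalently, for every $\tau\in[0,1]$, $\mathrm{DI}(f;\bar D)\ge\tau$ implies $\mathrm{BER}(f;\bar D)\ge\tau/2$.
   Context: A randomised classifier $f\colon\mathcal X\to[0,1]$ predicts $1$ on $x$ with probability $f(x)$. $\mathrm{FNR}(f;\bar D)=\mathbb E_{\mathsf X\mid\bar{\mathsf Y}=1}[1-f(\mathsf X)]$, $\mathrm{FPR}(f;\bar D)=\mathbb E_{\mathsf X\mid\bar{\mathsf Y}=0}[f(\mathsf X)]$, the balanced error is $\mathrm{BER}(f;\bar D)=\frac{\mathrm{FPR}(f;\bar D)+\mathrm{FNR}(f;\bar D)}{2}$, and the disparate impact factor is $\mathrm{DI}(f;\bar D)=\frac{\mathrm{FPR}(f;\bar D)}{1-\mathrm{FNR}(f;\bar D)}$. *)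

From HB Require Import structures.
From mathcomp Require Import all_boot all_order all_algebra.
From mathcomp Require Import all_classical all_reals all_analysis.
Set Implicit Arguments. Unset Strict Implicit. Unset Printing Implicit Defensive.
Import Order.TTheory GRing.Theory Num.Theory.
Local Open Scope classical_set_scope.
Local Open Scope ring_scope.

(* A distribution Dbar of (X, Ybar) is a probability measure P on the product
   measurable space T * bool (bool with its discrete sigma-algebra).
   A randomised classifier is a measurable f : T -> R with values in [0,1]. *)

Section Rates.
Context (d : measure_display) (T : measurableType d) (R : realType).
Variable P : probability (T * bool)%type R.
Variable f : T -> R.

Definition Ypos : set (T * bool) := [set z | z.2 = true].
Definition Yneg : set (T * bool) := [set z | z.2 = false].

Definition FNR : R :=
  Rintegral P Ypos (fun z => 1 - f z.1) / fine (P Ypos).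
Definition FPR : R :=
  Rintegral P Yneg (fun z => f z.1) / fine (P Yneg).
Definition BER : R := (FPR + FNR) / 2.
Definition DI : R := FPR / (1 - FNR).
End Rates.

From HB Require Import structures.
From mathcomp Require Import all_boot all_order all_algebra.
From mathcomp Require Import all_classical all_reals all_analysis.
From mathcomp Require Import lra.
Import Order.TTheory GRing.Theory Num.Theory.
Local Open Scope classical_set_scope.
Local Open Scope ring_scope.

(* Write a = FNR and b = FPR, both nonnegative.  If a < 1 and (a + b)/2 <= eps
   <= 1/2, then b <= 2 eps - a <= 2 eps (1 - a) because 2 eps <= 1, i.e.
   DI = b/(1 - a) <= 2 eps; if a > 1 then DI <= 0.  The bound for tau is the
   contrapositive, applied with eps = BER. *)

Lemma ratio_le_twice_mean (R : realFieldType) (a b eps : R) :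
  0 <= a -> 0 <= b -> a != 1 -> eps <= 2^-1 -> (b + a) / 2 <= eps ->
  b / (1 - a) <= 2 * eps.
Proof.
move=> a_ge0 b_ge0 a_neq1 eps_le mean_le.
have [a_lt1|a_gt1] : a < 1 \/ 1 < a.
  by case: ltgtP a_neq1 => // _ _; [left|right].
- have a1_gt0 : 0 < 1 - a by rewrite subr_gt0.
  rewrite ler_pdivrMr //; nra.
- have ratio_le0 : b / (1 - a) <= 0.
    by apply: mulr_ge0_le0 => //; rewrite invr_le0 subr_le0 ltW.
  lra.
Qed.

Section ClassifierRates.
Context (d : measure_display) (T : measurableType d) (R : realType).
Variables (P : probability (T * bool)%type R) (f : T -> R).
Hypothesis f01 : forall x, 0 <= f x <= 1.

Lemma FNR_ge0 : 0 <= FNR P f.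
Proof.
apply: divr_ge0; last exact: fine_ge0.
by apply: Rintegral_ge0 => z _; rewrite subr_ge0; case/andP: (f01 z.1).
Qed.

Lemma FPR_ge0 : 0 <= FPR P f.
Proof.
apply: divr_ge0; last exact: fine_ge0.
by apply: Rintegral_ge0 => z _; case/andP: (f01 z.1).
Qed.

Hypothesis FNR_neq1 : FNR P f != 1.

Lemma DI_le_twice_BER_bound (eps : R) :
  eps <= 2^-1 -> BER P f <= eps -> DI P f <= 2 * eps.
Proof. exact: ratio_le_twice_mean FNR_ge0 FPR_ge0 FNR_neq1. Qed.

Lemma BER_ge_half_DI_bound (tau : R) :
  tau <= 1 -> tau <= DI P f -> tau / 2 <= BER P f.
Proof.
move=> tau_le1 tau_le_DI; rewrite leNgt; apply/negP => BER_lt.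
have BER_le_half : BER P f <= 2^-1 by lra.
have := @DI_le_twice_BER_bound (BER P f) BER_le_half (lexx _).
lra.
Qed.

End ClassifierRates.

Theorem corollary3 (d : measure_display) (T : measurableType d) (R : realType)
  (P : probability (T * bool)%type R) (f : T -> R)
  (hPpos : (0 < P (@Ypos _ T))%E) (hPneg : (0 < P (@Yneg _ T))%E)
  (hfm : measurable_fun setT f) (hf01 : forall x, 0 <= f x <= 1)
  (hFNR : FNR P f != 1) :
  (forall eps : R, 0 <= eps <= 2^-1 -> BER P f <= eps -> DI P f <= 2 * eps) /\
  (forall tau : R, 0 <= tau <= 1 -> DI P f >= tau -> BER P f >= tau / 2).
Proof.
split=> [eps /andP[_ eps_le]|tau /andP[_ tau_le1]].
- exact: DI_le_twice_BER_bound.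
- exact: BER_ge_half_DI_bound.
Qed.
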